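(* Let $p_1,p_3,\beta,q_0,q_1\in\mathbb{R}$ with either $p_3=0$ or $\beta=1$, and let $q_2=5(q_1-3q_0)$. Then there is a polynomial $F$ in $u,u_x,\dots,u_{4x}$ such that for every smooth solution $u(x,t)$ of $$u_t=p_1(u^2)_x+p_3(uu_{xx}+\beta u_x^2)_x+q_0uu_{5x}+q_1u_xu_{4x}+q_2u_{2x}u_{3x}$$ one has $\partial_t(u^3)=\partial_x\big(F(u,u_x,\dots,u_{4x})\big)$. Consequently, for solutions decaying rapidly at $x\to\pm\infty$ together with their derivatives, $\int_{-\infty}^{\infty}u^3\,dx$ is independent of $t$.
   Context: Subscripts denote partial derivatives, $u_{kx}=\partial_x^k u$. *)

From Stdlib Require Import Reals.
Open Scope R_scope.

(* Variable i is interpreted as env i; in the theorem env i = u_{ix}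
   for i = 0..4 (and 0 for i >= 5, so F is a polynomial in u,...,u_{4x}). *)
Inductive mpoly : Type :=
| PConst : R -> mpoly
| PVar : nat -> mpoly
| PAdd : mpoly -> mpoly -> mpoly
| PMul : mpoly -> mpoly -> mpoly.

Fixpoint peval (env : nat -> R) (p : mpoly) : R :=
  match p with
  | PConst c => c
  | PVar i => env i
  | PAdd p q => peval env p + peval env q
  | PMul p q => peval env p * peval env q
  end.

(* environment (u, u_x, u_2x, u_3x, u_4x) *)
Definition env5 (a0 a1 a2 a3 a4 : R) (i : nat) : R :=
  match i with
  | O => a0 | 1%nat => a1 | 2%nat => a2 | 3%nat => a3 | 4%nat => a4 | _ => 0
  end.

Definition is_dx (f g : R -> R -> R) : Prop :=
  forall x t, derivable_pt_lim (fun y => f y t) x (g x t).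
Definition is_dt (f g : R -> R -> R) : Prop :=
  forall x t, derivable_pt_lim (fun s => f x s) t (g x t).

Definition cont2 (f : R -> R -> R) : Prop :=
  forall x t eps, 0 < eps -> exists delta, 0 < delta /\
    forall x' t', Rabs (x' - x) < delta -> Rabs (t' - t) < delta ->
      Rabs (f x' t' - f x t) < eps.

Fixpoint Ck (n : nat) (f : R -> R -> R) : Prop :=
  match n with
  | O => cont2 f
  | S m => cont2 f /\ exists fx ft, is_dx f fx /\ is_dt f ft /\ Ck m fx /\ Ck m ft
  end.

Definition smooth2 (f : R -> R -> R) : Prop := forall n, Ck n f.

Definition rapid_decay (f : R -> R -> R) : Prop :=
  forall (N : nat) T eps, 0 < eps -> exists M, forall x t,
    Rabs t <= T -> M <= Rabs x -> Rabs (x ^ N * f x t) < eps.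

Definition improper_int (f : R -> R) (l : R) : Prop :=
  forall eps, 0 < eps -> exists M, forall a b, a <= - M -> M <= b ->
    exists pr : Riemann_integrable f a b, Rabs (RiemannInt pr - l) < eps.

(* right-hand side of the PDE, with (u^2)_x and (u u_xx + beta u_x^2)_x expanded *)
Definition pde_rhs (p1 p3 beta q0 q1 q2 u0 u1 u2 u3 u4 u5 : R) : R :=
  p1 * (2 * u0 * u1)
  + p3 * (u1 * u2 + u0 * u3 + beta * (2 * u1 * u2))
  + q0 * u0 * u5 + q1 * u1 * u4 + q2 * u2 * u3.

Definition is_solution (p1 p3 beta q0 q1 q2 : R)
  (u u1 u2 u3 u4 u5 ut : R -> R -> R) : Prop :=
  smooth2 u /\
  is_dx u u1 /\ is_dx u1 u2 /\ is_dx u2 u3 /\ is_dx u3 u4 /\ is_dx u4 u5 /\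
  is_dt u ut /\
  forall x t, ut x t = pde_rhs p1 p3 beta q0 q1 q2
                (u x t) (u1 x t) (u2 x t) (u3 x t) (u4 x t) (u5 x t).

From Stdlib Require Import Reals Lra Lia.
From Coquelicot Require Import Coquelicot.
Open Scope R_scope.

(* Multiplying the equation by 3 u^2 and integrating by parts in x writes 3 u^2 u_t
   as the x-derivative of a polynomial flux F; the two hypotheses on the coefficients
   are exactly what is needed for the leftover terms to cancel.  For a < b,
   d/dt of the integral of u^3 over [a, b] is then F(b, t) - F(a, t), so by the mean
   value theorem this integral at time t differs from its value at time 0 by at most
   |t| times a bound on the flux at a and b.  Since F has no constant term, that bound
   tends to 0 as a -> -oo and b -> +oo, while at time 0 the improper integral
   converges because u^3 = o(x^-2). *)

Fixpoint peval_deriv (e de : nat -> R) (p : mpoly) : R :=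
  match p with
  | PConst _ => 0
  | PVar i => de i
  | PAdd p q => peval_deriv e de p + peval_deriv e de q
  | PMul p q => peval_deriv e de p * peval e q + peval e p * peval_deriv e de q
  end.

Lemma derivable_pt_lim_peval (E : R -> nat -> R) (dE : nat -> R) x p :
  (forall i, derivable_pt_lim (fun y => E y i) x (dE i)) ->
  derivable_pt_lim (fun y => peval (E y) p) x (peval_deriv (E x) dE p).
Proof.
  intros HE; induction p as [c|i|p IHp q IHq|p IHp q IHq]; simpl.
  - apply derivable_pt_lim_const.
  - apply HE.
  - exact (derivable_pt_lim_plus _ _ x _ _ IHp IHq).
  - exact (derivable_pt_lim_mult _ _ x _ _ IHp IHq).
Qed.

Lemma Rmult_close p0 q0 eps : 0 < eps -> exists d, 0 < d /\
  forall p q, Rabs (p - p0) < d -> Rabs (q - q0) < d -> Rabs (p * q - p0 * q0) < eps.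
Proof.
  intros he.
  set (A := Rabs p0 + Rabs q0 + 1).
  assert (hA : 0 < A) by (unfold A; pose proof (Rabs_pos p0); pose proof (Rabs_pos q0); lra).
  exists (Rmin 1 (eps / (2 * A))); split.
  { apply Rmin_pos; [lra|]. apply Rdiv_lt_0_compat; lra. }
  intros p q hp hq.
  assert (hp1 := Rlt_le_trans _ _ _ hp (Rmin_l _ _)).
  assert (hp2 := Rlt_le_trans _ _ _ hp (Rmin_r _ _)).
  assert (hq2 := Rlt_le_trans _ _ _ hq (Rmin_r _ _)).
  assert (hAd : A * (eps / (2 * A)) = eps / 2) by (field; lra).
  assert (Hp : Rabs p <= Rabs p0 + 1).
  { replace p with (p0 + (p - p0)) by ring. pose proof (Rabs_triang p0 (p - p0)); lra. }
  replace (p * q - p0 * q0) with (p * (q - q0) + q0 * (p - p0)) by ring.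
  eapply Rle_lt_trans; [apply Rabs_triang|]. rewrite !Rabs_mult.
  pose proof (Rabs_pos q0); pose proof (Rabs_pos p); pose proof (Rabs_pos (q - q0)).
  unfold A in *. nra.
Qed.

Lemma peval_continuous (e0 : nat -> R) p eps : 0 < eps -> exists d, 0 < d /\
  forall e, (forall i, Rabs (e i - e0 i) < d) -> Rabs (peval e p - peval e0 p) < eps.
Proof.
  revert eps; induction p as [c|i|p IHp q IHq|p IHp q IHq]; intros eps he; simpl.
  - exists 1; split; [lra|]. intros. rewrite Rminus_diag, Rabs_R0; lra.
  - exists eps; split; [lra|]. intros e He; apply He.
  - destruct (IHp (eps / 2)) as [d1 [h1 H1]]; [lra|].
    destruct (IHq (eps / 2)) as [d2 [h2 H2]]; [lra|].
    exists (Rmin d1 d2); split; [apply Rmin_pos; auto|]. intros e He.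
    specialize (H1 e (fun i => Rlt_le_trans _ _ _ (He i) (Rmin_l _ _))).
    specialize (H2 e (fun i => Rlt_le_trans _ _ _ (He i) (Rmin_r _ _))).
    replace (peval e p + peval e q - (peval e0 p + peval e0 q))
      with ((peval e p - peval e0 p) + (peval e q - peval e0 q)) by ring.
    eapply Rle_lt_trans; [apply Rabs_triang|]. lra.
  - destruct (Rmult_close (peval e0 p) (peval e0 q) eps he) as [d [hd Hd]].
    destruct (IHp d hd) as [d1 [h1 H1]].
    destruct (IHq d hd) as [d2 [h2 H2]].
    exists (Rmin d1 d2); split; [apply Rmin_pos; auto|]. intros e He.
    apply Hd.
    + apply H1. intros i. exact (Rlt_le_trans _ _ _ (He i) (Rmin_l _ _)).
    + apply H2. intros i. exact (Rlt_le_trans _ _ _ (He i) (Rmin_r _ _)).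
Qed.

Lemma cont2_const c : cont2 (fun _ _ => c).
Proof. intros x t eps he. exists 1; split; [lra|]. intros. rewrite Rminus_diag, Rabs_R0; auto. Qed.

Lemma cont2_mult f g : cont2 f -> cont2 g -> cont2 (fun x t => f x t * g x t).
Proof.
  intros Hf Hg x t eps he.
  destruct (Rmult_close (f x t) (g x t) eps he) as [d [hd Hd]].
  destruct (Hf x t d hd) as [d1 [h1 H1]].
  destruct (Hg x t d hd) as [d2 [h2 H2]].
  exists (Rmin d1 d2); split; [apply Rmin_pos; auto|]. intros x' t' hx ht.
  pose proof (Rmin_l d1 d2); pose proof (Rmin_r d1 d2).
  apply Hd; [apply H1 | apply H2]; lra.
Qed.

Lemma cont2_pow f n : cont2 f -> cont2 (fun x t => f x t ^ n).
Proof.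
  intros Hf; induction n as [|n IH]; simpl.
  - apply cont2_const.
  - exact (cont2_mult _ _ Hf IH).
Qed.

Lemma cont2_continuous_x f : cont2 f -> forall x t, continuous (fun y => f y t) x.
Proof.
  intros H x t. apply continuity_pt_filterlim. intros eps he.
  destruct (H x t eps he) as [d [hd Hd]]. exists d; split; auto.
  intros y [_ hy]. simpl in *. unfold R_dist in *. apply Hd; auto.
  rewrite Rminus_diag, Rabs_R0; auto.
Qed.

Lemma smooth2_is_dt_cont2 f ft : smooth2 f -> is_dt f ft -> cont2 ft.
Proof.
  intros Hs Hdt.
  destruct (Hs 1%nat) as [_ [fx [ft' [_ [Hdt' [_ Hc]]]]]].
  assert (E : forall x t, ft' x t = ft x t)
    by (intros x t; exact (uniqueness_limite _ _ _ _ (Hdt' x t) (Hdt x t))).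
  intros x t eps he. destruct (Hc x t eps he) as [d [hd Hd]].
  exists d; split; [exact hd|]. intros x' t' hx ht. rewrite <- !E. auto.
Qed.

Definition little_o_inv_sq (h : R -> R) : Prop :=
  forall e, 0 < e -> exists M, 1 <= M /\ forall x, M <= Rabs x -> Rabs (h x) <= e / x ^ 2.

Lemma RInt_split h a b c : (forall a b, ex_RInt h a b) -> RInt h a c = RInt h a b + RInt h b c.
Proof. intros H. rewrite <- (RInt_Chasles h a b c); auto. Qed.

Lemma is_RInt_inv_sq e p q : p <= q -> (0 < p \/ q < 0) ->
  is_RInt (fun x => e / x ^ 2) p q (e / p - e / q).
Proof.
  intros hpq hs.
  assert (nz : forall x, Rmin p q <= x <= Rmax p q -> x <> 0).
  { rewrite Rmin_left, Rmax_right by lra. intros x hx; lra. }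
  replace (e / p - e / q) with (minus ((fun x => - e / x) q) ((fun x => - e / x) p)).
  2:{ unfold minus, plus, opp; simpl. destruct hs; field; lra. }
  apply (is_RInt_derive (fun x => - e / x) (fun x => e / x ^ 2)).
  - intros x hx. specialize (nz x hx). auto_derive; auto. field; auto.
  - intros x hx. specialize (nz x hx).
    apply (ex_derive_continuous (fun x => e / x ^ 2)). auto_derive. auto.
Qed.

Lemma RInt_le_inv_sq (h : R -> R) p q e : 0 <= e -> p <= q -> (1 <= p \/ q <= -1) ->
  ex_RInt h p q -> (forall x, p <= x <= q -> Rabs (h x) <= e / x ^ 2) ->
  Rabs (RInt h p q) <= e.
Proof.
  intros he hpq hs hi hb.
  assert (Hg := is_RInt_inv_sq e p q hpq ltac:(lra)).
  assert (Hg' := is_RInt_opp _ _ _ _ Hg).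
  assert (U : RInt h p q <= e / p - e / q).
  { rewrite <- (is_RInt_unique _ _ _ _ Hg). apply RInt_le; auto; [eexists; eauto|].
    intros x hx. specialize (hb x ltac:(lra)). apply Rabs_le_between in hb. lra. }
  assert (L : - (e / p - e / q) <= RInt h p q).
  { assert (E : RInt (fun x => opp (e / x ^ 2)) p q = - (e / p - e / q))
      by exact (is_RInt_unique _ _ _ _ Hg').
    rewrite <- E. apply RInt_le; auto; [eexists; eauto|].
    intros x hx. specialize (hb x ltac:(lra)). apply Rabs_le_between in hb.
    unfold opp; simpl in *. lra. }
  assert (B : 0 <= / p - / q <= 1).
  { destruct hs.
    - assert (/ q <= / p) by (apply Rinv_le_contravar; lra).
      assert (0 < / q) by (apply Rinv_0_lt_compat; lra).
      assert (/ p <= / 1) by (apply Rinv_le_contravar; lra).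
      rewrite Rinv_1 in *. lra.
    - assert (/ - p <= / - q) by (apply Rinv_le_contravar; lra).
      assert (/ p < 0) by (apply Rinv_lt_0_compat; lra).
      assert (/ - q <= / 1) by (apply Rinv_le_contravar; lra).
      rewrite !Rinv_opp, Rinv_1 in *. lra. }
  replace (e / p - e / q) with (e * (/ p - / q)) in * by (unfold Rdiv; ring).
  apply Rabs_le; nra.
Qed.

Lemma RInt_tails_le (h : R -> R) : (forall a b, ex_RInt h a b) -> little_o_inv_sq h ->
  forall e, 0 < e -> exists M, 1 <= M /\ forall a b a' b', a' <= a <= - M -> M <= b <= b' ->
    Rabs (RInt h a' b' - RInt h a b) <= e.
Proof.
  intros Hi Hd e he. destruct (Hd (e / 2)) as [M [hM HM]]; [lra|].
  exists M; split; [exact hM|]. intros a b a' b' ha hb.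
  rewrite (RInt_split h a' a b') by exact Hi. rewrite (RInt_split h a b b') by exact Hi.
  replace (RInt h a' a + (RInt h a b + RInt h b b') - RInt h a b)
    with (RInt h a' a + RInt h b b') by ring.
  assert (Rabs (RInt h a' a) <= e / 2).
  { apply RInt_le_inv_sq; auto; try lra.
    intros x hx. apply HM. rewrite Rabs_left; lra. }
  assert (Rabs (RInt h b b') <= e / 2).
  { apply RInt_le_inv_sq; auto; try lra.
    intros x hx. apply HM. rewrite Rabs_right; lra. }
  eapply Rle_trans; [apply Rabs_triang|]. lra.
Qed.

Lemma RInt_improper_limit (h : R -> R) : (forall a b, ex_RInt h a b) -> little_o_inv_sq h ->
  exists c, forall eps, 0 < eps -> exists M, 0 <= M /\
    forall a b, a <= - M -> M <= b -> Rabs (RInt h a b - c) < eps.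
Proof.
  intros Hi Hd.
  set (s := fun n : nat => RInt h (- INR n) (INR n)).
  assert (Cs : Cauchy_crit s).
  { intros eps he. destruct (RInt_tails_le h Hi Hd (eps / 2)) as [M [hM HM]]; [lra|].
    destruct (INR_unbounded M) as [N hN]. exists N.
    assert (K : forall n m, (N <= m <= n)%nat -> Rabs (s n - s m) < eps).
    { intros n m hnm.
      assert (INR N <= INR m) by (apply le_INR; lia).
      assert (INR m <= INR n) by (apply le_INR; lia).
      assert (Rabs (s n - s m) <= eps / 2) by (apply HM; lra). lra. }
    intros n m hn hm. unfold Rdist. destruct (Nat.le_ge_cases m n).
    - apply K; lia.
    - rewrite Rabs_minus_sym. apply K; lia. }
  destruct (Rcomplete.R_complete s Cs) as [c Hc].
  exists c. intros eps he.
  destruct (RInt_tails_le h Hi Hd (eps / 2)) as [M [hM HM]]; [lra|].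
  exists M; split; [lra|]. intros a b ha hb.
  destruct (Hc (eps / 2)) as [N1 HN1]; [lra|].
  destruct (INR_unbounded (Rmax (- a) b)) as [N2 hN2].
  set (n := Nat.max N1 N2).
  assert (INR N2 <= INR n) by (apply le_INR; lia).
  pose proof (Rmax_l (- a) b); pose proof (Rmax_r (- a) b).
  assert (Rabs (s n - RInt h a b) <= eps / 2) by (apply HM; lra).
  assert (Rabs (s n - c) < eps / 2) by (apply HN1; lia).
  replace (RInt h a b - c) with ((s n - c) - (s n - RInt h a b)) by ring.
  eapply Rle_lt_trans; [apply Rabs_triang|]. rewrite Rabs_Ropp. lra.
Qed.

Definition vanishes_at_infinity (f : R -> R -> R) : Prop :=
  forall T e, 0 < e -> exists M, forall x t, Rabs t <= T -> M <= Rabs x -> Rabs (f x t) < e.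

Section Conservation.

Variables G g Phi : R -> R -> R.
Hypothesis G_cont : cont2 G.
Hypothesis g_cont : cont2 g.
Hypothesis G_dt : forall x s, derivable_pt_lim (fun s => G x s) s (g x s).
Hypothesis Phi_dx : forall x s, derivable_pt_lim (fun y => Phi y s) x (g x s).

Lemma ex_RInt_G t a b : ex_RInt (fun x => G x t) a b.
Proof.
  apply (ex_RInt_continuous (V := R_CompleteNormedModule)).
  intros z _. apply cont2_continuous_x, G_cont.
Qed.

Lemma is_derive_RInt_G a b s :
  is_derive (fun s => RInt (fun x => G x s) a b) s (RInt (fun x => g x s) a b).
Proof.
  assert (Der : forall x s, Derive (fun s => G x s) s = g x s)
    by (intros; apply is_derive_unique, is_derive_Reals, G_dt).
  rewrite (RInt_ext _ (fun x => Derive (fun u => G x u) s)) by (intros; rewrite Der; auto).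
  apply (is_derive_RInt_param (fun s x => G x s) a b s).
  - apply filter_forall. intros s0 x _. exists (g x s0). apply is_derive_Reals, G_dt.
  - intros x _ eps. destruct (g_cont x s eps (cond_pos eps)) as [d [hd Hd]].
    exists (mkposreal d hd). intros u v hu hv. simpl in *. rewrite !Der. apply Hd; auto.
  - apply filter_forall. intros s0. apply ex_RInt_G.
Qed.

Lemma RInt_G_variation_le a b t K :
  (forall s, Rabs s <= Rabs t -> Rabs (Phi b s - Phi a s) <= K) ->
  Rabs (RInt (fun x => G x t) a b - RInt (fun x => G x 0) a b) <= Rabs t * K.
Proof.
  intros HK.
  assert (Flux : forall s, RInt (fun x => g x s) a b = Phi b s - Phi a s).
  { intros s. apply is_RInt_unique.
    apply (is_RInt_derive (fun y => Phi y s) (fun x => g x s)).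
    - intros x _. apply is_derive_Reals, Phi_dx.
    - intros x _. apply cont2_continuous_x, g_cont. }
  assert (D : forall s, Rmin 0 t < s < Rmax 0 t ->
     is_derive (fun s => RInt (fun x => G x s) a b) s (Phi b s - Phi a s))
    by (intros s _; rewrite <- Flux; apply is_derive_RInt_G).
  assert (C : forall s, Rmin 0 t <= s <= Rmax 0 t ->
     continuity_pt (fun s => RInt (fun x => G x s) a b) s).
  { intros s _. apply continuity_pt_filterlim.
    apply (ex_derive_continuous (fun s => RInt (fun x => G x s) a b)).
    eexists. apply is_derive_RInt_G. }
  destruct (MVT_gen _ 0 t _ D C) as [c [hc Hc]].
  rewrite Hc, Rminus_0_r, Rabs_mult, Rmult_comm.
  apply Rmult_le_compat_l; [apply Rabs_pos|]. apply HK.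
  destruct (Rle_dec 0 t).
  - rewrite Rmin_left, Rmax_right in hc by lra. rewrite !Rabs_right; lra.
  - rewrite Rmin_right, Rmax_left in hc by lra. rewrite (Rabs_left t) by lra.
    unfold Rabs; destruct (Rcase_abs c); lra.
Qed.

Lemma improper_int_conserved :
  little_o_inv_sq (fun x => G x 0) -> vanishes_at_infinity Phi ->
  exists c, forall t, improper_int (fun x => G x t) c.
Proof.
  intros H0 HPhi.
  destruct (RInt_improper_limit _ (ex_RInt_G 0) H0) as [c Hc].
  exists c. intros t eps he.
  set (K := eps / (4 * (Rabs t + 1))).
  assert (hK : 0 < K) by (unfold K; pose proof (Rabs_pos t); apply Rdiv_lt_0_compat; lra).
  assert (Small : Rabs t * (2 * K) < eps / 2).
  { assert ((Rabs t + 1) * (2 * K) = eps / 2) by (unfold K; pose proof (Rabs_pos t); field; lra).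
    nra. }
  destruct (Hc (eps / 2)) as [M1 [hM1 HM1]]; [lra|].
  destruct (HPhi (Rabs t) K hK) as [M2 HM2].
  exists (Rmax M1 M2). intros a b ha hb.
  pose proof (Rmax_l M1 M2); pose proof (Rmax_r M1 M2).
  assert (Bd : forall s, Rabs s <= Rabs t -> Rabs (Phi b s - Phi a s) <= 2 * K).
  { intros s hs.
    assert (Rabs (Phi b s) < K) by (apply HM2; auto; rewrite Rabs_right; lra).
    assert (Rabs (Phi a s) < K) by (apply HM2; auto; rewrite Rabs_left1; lra).
    unfold Rminus. eapply Rle_trans; [apply Rabs_triang|]. rewrite Rabs_Ropp. lra. }
  pose proof (RInt_G_variation_le a b t (2 * K) Bd).
  assert (Rabs (RInt (fun x => G x 0) a b - c) < eps / 2) by (apply HM1; lra).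
  exists (ex_RInt_Reals_0 _ _ _ (ex_RInt_G t a b)). rewrite <- RInt_Reals.
  replace (RInt (fun x => G x t) a b - c) with
    ((RInt (fun x => G x t) a b - RInt (fun x => G x 0) a b) + (RInt (fun x => G x 0) a b - c))
    by ring.
  eapply Rle_lt_trans; [apply Rabs_triang|]. lra.
Qed.

End Conservation.

Lemma rapid_decay_vanishes f : rapid_decay f -> vanishes_at_infinity f.
Proof.
  intros H T e he. destruct (H 0%nat T e he) as [M HM]. exists M. intros x t ht hx.
  specialize (HM x t ht hx). simpl in HM. rewrite Rmult_1_l in HM. exact HM.
Qed.

Lemma rapid_decay_cube_little_o f t : rapid_decay f -> little_o_inv_sq (fun x => f x t ^ 3).
Proof.
  intros H e he.
  destruct (rapid_decay_vanishes f H (Rabs t) 1 ltac:(lra)) as [M0 HM0].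
  destruct (H 2%nat (Rabs t) e he) as [M2 HM2].
  exists (Rmax 1 (Rmax M0 M2)). split; [apply Rmax_l|]. intros x hx.
  pose proof (Rmax_l 1 (Rmax M0 M2)); pose proof (Rmax_r 1 (Rmax M0 M2)).
  pose proof (Rmax_l M0 M2); pose proof (Rmax_r M0 M2).
  specialize (HM0 x t (Rle_refl _) ltac:(lra)). specialize (HM2 x t (Rle_refl _) ltac:(lra)).
  rewrite Rabs_mult, (Rabs_right (x ^ 2)) in HM2 by (apply Rle_ge, pow2_ge_0).
  assert (X1 : 1 <= x ^ 2).
  { rewrite <- (pow2_abs x). replace 1 with (1 ^ 2) by ring. apply pow_incr; lra. }
  rewrite <- RPow_abs. set (a := Rabs (f x t)) in *.
  assert (0 <= a) by apply Rabs_pos.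
  assert (a <= e / x ^ 2).
  { apply (Rmult_le_reg_r (x ^ 2)); [lra|]. unfold Rdiv.
    rewrite Rmult_assoc, Rinv_l, Rmult_1_r by lra. lra. }
  assert (a ^ 3 <= a) by (simpl; nra). lra.
Qed.

Lemma peval_env5_vanishes F u0 u1 u2 u3 u4 :
  peval (env5 0 0 0 0 0) F = 0 ->
  vanishes_at_infinity u0 -> vanishes_at_infinity u1 -> vanishes_at_infinity u2 ->
  vanishes_at_infinity u3 -> vanishes_at_infinity u4 ->
  vanishes_at_infinity (fun x t => peval (env5 (u0 x t) (u1 x t) (u2 x t) (u3 x t) (u4 x t)) F).
Proof.
  intros F0 H0 H1 H2 H3 H4 T e he.
  destruct (peval_continuous (env5 0 0 0 0 0) F e he) as [d [hd Hd]].
  rewrite F0 in Hd.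
  destruct (H0 T d hd) as [M0 HM0]; destruct (H1 T d hd) as [M1 HM1];
  destruct (H2 T d hd) as [M2 HM2]; destruct (H3 T d hd) as [M3 HM3];
  destruct (H4 T d hd) as [M4 HM4].
  exists (Rmax M0 (Rmax M1 (Rmax M2 (Rmax M3 M4)))). intros x t ht hx.
  pose proof (Rmax_l M0 (Rmax M1 (Rmax M2 (Rmax M3 M4))));
  pose proof (Rmax_r M0 (Rmax M1 (Rmax M2 (Rmax M3 M4))));
  pose proof (Rmax_l M1 (Rmax M2 (Rmax M3 M4))); pose proof (Rmax_r M1 (Rmax M2 (Rmax M3 M4)));
  pose proof (Rmax_l M2 (Rmax M3 M4)); pose proof (Rmax_r M2 (Rmax M3 M4));
  pose proof (Rmax_l M3 M4); pose proof (Rmax_r M3 M4).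
  rewrite <- (Rminus_0_r (peval _ F)). apply Hd.
  intros [|[|[|[|[|i]]]]]; simpl; rewrite ?Rminus_0_r.
  - apply HM0; auto; lra.
  - apply HM1; auto; lra.
  - apply HM2; auto; lra.
  - apply HM3; auto; lra.
  - apply HM4; auto; lra.
  - rewrite Rabs_R0; exact hd.
Qed.

Local Notation "a ** b" := (PMul a b) (at level 40, left associativity).
Local Notation "a ++ b" := (PAdd a b).

(* 3 q0 u^3 u_4x absorbs the u u_5x term; the remaining u^2 u_x u_4x and u^2 u_2x u_3x
   terms form an exact derivative only when q2 = 5 (q1 - 3 q0). *)
Definition flux (p1 p3 q0 q1 q2 : R) : mpoly :=
  PConst (3 / 2 * p1) ** PVar 0 ** PVar 0 ** PVar 0 ** PVar 0
  ++ PConst (3 * p3) ** PVar 0 ** PVar 0 ** PVar 0 ** PVar 2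
  ++ PConst (3 * q0) ** PVar 0 ** PVar 0 ** PVar 0 ** PVar 4
  ++ PConst (3 * (q1 - 3 * q0)) **
       (PVar 0 ** PVar 0 ** PVar 1 ** PVar 3
        ++ PConst (-2) ** PVar 0 ** PVar 1 ** PVar 1 ** PVar 2
        ++ PConst (1 / 2) ** PVar 1 ** PVar 1 ** PVar 1 ** PVar 1
        ++ PConst (-1 / 2) ** PVar 0 ** PVar 0 ** PVar 2 ** PVar 2)
  ++ PConst (3 / 2 * q2) ** PVar 0 ** PVar 0 ** PVar 2 ** PVar 2.

Lemma flux_env5_zero p1 p3 q0 q1 q2 : peval (env5 0 0 0 0 0) (flux p1 p3 q0 q1 q2) = 0.
Proof. simpl; ring. Qed.

Lemma peval_deriv_flux (p1 p3 beta q0 q1 q2 u0 u1 u2 u3 u4 u5 : R) :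
  p3 = 0 \/ beta = 1 -> q2 = 5 * (q1 - 3 * q0) ->
  peval_deriv (env5 u0 u1 u2 u3 u4) (env5 u1 u2 u3 u4 u5) (flux p1 p3 q0 q1 q2)
  = 3 * u0 ^ 2 * pde_rhs p1 p3 beta q0 q1 q2 u0 u1 u2 u3 u4 u5.
Proof. intros [-> | ->] ->; unfold pde_rhs; simpl; field. Qed.

Lemma derivable_pt_lim_cube f x l :
  derivable_pt_lim f x l -> derivable_pt_lim (fun y => f y ^ 3) x (3 * f x ^ 2 * l).
Proof.
  intros H. replace (3 * f x ^ 2 * l) with (INR 3 * f x ^ Nat.pred 3 * l)
    by (simpl; ring).
  exact (derivable_pt_lim_comp f (fun y => y ^ 3) x l _ H (derivable_pt_lim_pow (f x) 3)).
Qed.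

Section Solution.

Variables p1 p3 beta q0 q1 q2 : R.
Hypothesis hcase : p3 = 0 \/ beta = 1.
Hypothesis hq2 : q2 = 5 * (q1 - 3 * q0).
Variables u u1 u2 u3 u4 u5 ut : R -> R -> R.
Hypothesis Hsol : is_solution p1 p3 beta q0 q1 q2 u u1 u2 u3 u4 u5 ut.

Definition flux_of_u (x t : R) : R :=
  peval (env5 (u x t) (u1 x t) (u2 x t) (u3 x t) (u4 x t)) (flux p1 p3 q0 q1 q2).

Lemma derivable_pt_lim_cube_t x t :
  derivable_pt_lim (fun s => u x s ^ 3) t (3 * u x t ^ 2 * ut x t).
Proof.
  destruct Hsol as [_ [_ [_ [_ [_ [_ [Hdt _]]]]]]]. apply derivable_pt_lim_cube, Hdt.
Qed.

Lemma derivable_pt_lim_flux_x x t :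
  derivable_pt_lim (fun y => flux_of_u y t) x (3 * u x t ^ 2 * ut x t).
Proof.
  destruct Hsol as [_ [d1 [d2 [d3 [d4 [d5 [_ Hpde]]]]]]].
  rewrite Hpde, <- (peval_deriv_flux p1 p3 beta) by assumption.
  apply (derivable_pt_lim_peval (fun y => env5 (u y t) (u1 y t) (u2 y t) (u3 y t) (u4 y t))).
  intros [|[|[|[|[|i]]]]]; simpl; auto. apply derivable_pt_lim_const.
Qed.

Lemma improper_int_cube_conserved :
  rapid_decay u -> rapid_decay u1 -> rapid_decay u2 -> rapid_decay u3 -> rapid_decay u4 ->
  exists c, forall t, improper_int (fun x => u x t ^ 3) c.
Proof.
  intros du du1 du2 du3 du4.
  destruct Hsol as [Hsm [_ [_ [_ [_ [_ [Hdt _]]]]]]].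
  assert (cu : cont2 u) by exact (Hsm 0%nat).
  assert (cut : cont2 ut) by exact (smooth2_is_dt_cont2 u ut Hsm Hdt).
  apply (improper_int_conserved (fun x t => u x t ^ 3) (fun x t => 3 * u x t ^ 2 * ut x t)
           flux_of_u).
  - exact (cont2_pow u 3 cu).
  - exact (cont2_mult _ _ (cont2_mult _ _ (cont2_const 3) (cont2_pow u 2 cu)) cut).
  - exact derivable_pt_lim_cube_t.
  - exact derivable_pt_lim_flux_x.
  - exact (rapid_decay_cube_little_o u 0 du).
  - apply peval_env5_vanishes; [apply flux_env5_zero | apply rapid_decay_vanishes; assumption ..].
Qed.

End Solution.

Theorem mainTheorem10 (p1 p3 beta q0 q1 q2 : R)
  (hcase : p3 = 0 \/ beta = 1) (hq2 : q2 = 5 * (q1 - 3 * q0)) :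
  exists F : mpoly,
    (forall u u1 u2 u3 u4 u5 ut : R -> R -> R,
       is_solution p1 p3 beta q0 q1 q2 u u1 u2 u3 u4 u5 ut ->
       forall x t, exists D : R,
         derivable_pt_lim (fun s => (u x s) ^ 3) t D /\
         derivable_pt_lim
           (fun y => peval (env5 (u y t) (u1 y t) (u2 y t) (u3 y t) (u4 y t)) F) x D)
    /\
    (forall u u1 u2 u3 u4 u5 ut : R -> R -> R,
       is_solution p1 p3 beta q0 q1 q2 u u1 u2 u3 u4 u5 ut ->
       rapid_decay u -> rapid_decay u1 -> rapid_decay u2 ->
       rapid_decay u3 -> rapid_decay u4 -> rapid_decay u5 ->
       exists c : R, forall t, improper_int (fun x => (u x t) ^ 3) c).
Proof.
  exists (flux p1 p3 q0 q1 q2). split.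
  - intros u u1 u2 u3 u4 u5 ut Hsol x t. exists (3 * u x t ^ 2 * ut x t). split.
    + exact (derivable_pt_lim_cube_t p1 p3 beta q0 q1 q2 u u1 u2 u3 u4 u5 ut Hsol x t).
    + exact (derivable_pt_lim_flux_x p1 p3 beta q0 q1 q2 hcase hq2 u u1 u2 u3 u4 u5 ut Hsol x t).
  - intros u u1 u2 u3 u4 u5 ut Hsol du du1 du2 du3 du4 _.
    exact (improper_int_cube_conserved p1 p3 beta q0 q1 q2 hcase hq2
             u u1 u2 u3 u4 u5 ut Hsol du du1 du2 du3 du4).
Qed.
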